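(* Suppose the second-order condition of the context holds with $\gamma_0>-1/2$ and the intermediate sequence $(k_n)$ satisfies $\Phi(k_n/n)=O(k_n^{-1/2})$. Let $W$, $Q_n$, $\tilde a$, $\tilde\Phi$ be as in the context, let $W_n(t)=k_n^{-1/2}W(k_nt)$ (a standard Brownian motion) and $$Y_n(t)=k_n^{1/2}\Big(\frac{Q_n(t)-Q_n(1)}{\tilde a(k_n/n)}-\frac{t^{-\gamma_0}-1}{\gamma_0}\Big).$$ Then for every $\varepsilon>0$, as $n\to\infty$, $$\sup_{0<t\le1}t^{\gamma_0+1/2+\varepsilon}\Big|Y_n(t)-\Big(W_n(1)-t^{-(\gamma_0+1)}W_n(t)+k_n^{1/2}\tilde\Phi\Big(\frac{k_n}{n}\Big)\Psi(t)\Big)\Big|=o_p(1).$$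
   Context: Let $X_1,X_2,\dots$ be i.i.d. with distribution function $F$, $F^{\leftarrow}$ its generalized inverse, $X_{1,n}\le\dots\le X_{n,n}$ the order statistics; $(k_n)$ is intermediate: $k_n\to\infty$, $k_n/n\to0$. Throughout, $(t^{-\gamma_0}-1)/\gamma_0$ is read as $-\log t$ when $\gamma_0=0$. Second-order condition: there exist $\gamma_0>-1/2$ and measurable, locally bounded $a,\Phi:(0,1)\to(0,\infty)$, $\Psi:(0,\infty)\to\mathbb R$ with $\lim_{t\downarrow0}\big[(F^{\leftarrow}(1-tx)-F^{\leftarrow}(1-t))/a(t)-(x^{-\gamma_0}-1)/\gamma_0\big]/\Phi(t)=\Psi(x)$ for all $x>0$, $x\mapsto\Psi(x)/(x^{-\gamma_0}-1)$ not constant, $\Phi$ eventually not changing sign, $\Phi(t)\to0$ as $t\downarrow0$. Construction (available under these assumptions): on a suitable probability space there are a standard Brownian motion $W$ and processes $Q_n$ such that for each $n$, $(Q_n(t))_{t\in[0,1]}$ has the same distribution as $(X_{n-[k_nt],n})_{t\in[0,1]}$, and there are functions with $\tilde a(k_n/n)=a(k_n/n)(1+o(\Phi(k_n/n)))$ and $\tilde\Phi(k_n/n)\sim\Phi(k_n/n)$ such that for all $\varepsilon>0$ $$\sup_{t\in(0,1]}t^{\gamma_0+1/2+\varepsilon}\Big|\frac{Q_n(t)-F^{\leftarrow}(1-k_n/n)}{\tilde a(k_n/n)}-\Big(\frac{t^{-\gamma_0}-1}{\gamma_0}-t^{-(\gamma_0+1)}\frac{W(k_nt)}{k_n}+\tilde\Phi\Big(\frac{k_n}{n}\Big)\Psi(t)\Big)\Big|=o_p(k_n^{-1/2})+o_p\Big(\tilde\Phi\Big(\frac{k_n}{n}\Big)\Big).$$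 *)

From HB Require Import structures.
From mathcomp Require Import all_boot all_order all_algebra.
From mathcomp Require Import all_classical all_reals all_analysis.
Import Order.TTheory GRing.Theory Num.Theory.
Import numFieldNormedType.Exports.
Local Open Scope classical_set_scope.
Local Open Scope ring_scope.

Section defs.
Context {R : realType}.

Definition hgam (g t : R) : R :=
  if g == 0 then - ln t else (powR t (- g) - 1) / g.

Definition Finv (F : R -> R) (p : R) : R := inf [set x | p <= F x].

(* j-th order statistic (1-indexed) X_{j,n} of the sample x 0, ..., x (n-1) *)
Definition ordstat (x : nat -> R) (n j : nat) : R :=
  nth 0 (sort <=%R [seq x i | i <- iota 0 n]) j.-1.

Definition intermediate (k : nat -> nat) : Prop :=
  (forall M : nat, \forall n \near \oo, (M <= k n)%N) /\
  ((fun n : nat => (k n)%:R / n%:R : R) @ \oo --> (0 : R)).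

Definition second_order (F : R -> R) (g : R) (a Phi Psi : R -> R) : Prop :=
  (forall t, 0 < t < 1 -> 0 < a t /\ 0 < Phi t) /\
  (measurable_fun (`]0, 1[ : set R) a /\ measurable_fun (`]0, 1[ : set R) Phi) /\
  (forall u v, 0 < u -> v < 1 -> exists M : R,
      forall t, u <= t <= v -> `|a t| <= M /\ `|Phi t| <= M) /\
  (forall x, 0 < x ->
     (fun t => ((Finv F (1 - t * x) - Finv F (1 - t)) / a t - hgam g x) / Phi t)
       @ 0^'+ --> Psi x) /\
  ~ (exists c : R, forall x, 0 < x -> x != 1 -> Psi x = c * hgam g x) /\
  (exists e : R, 0 < e /\ ((forall t, 0 < t < e -> 0 <= Phi t) \/
                           (forall t, 0 < t < e -> Phi t <= 0))) /\
  Phi @ 0^'+ --> 0.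

(* (X_i) are i.i.d. with distribution function F: joint cdf is the product *)
Definition iid_cdf {d} {T : measurableType d} (P : probability T R)
    (X : nat -> T -> R) (F : R -> R) : Prop :=
  (forall i, measurable_fun setT (X i)) /\
  forall (n : nat) (xs : nat -> R),
    P [set w | forall i, (i < n)%N -> X i w <= xs i] = (\prod_(i < n) F (xs i))%:E.

(* standard Brownian motion on [0, oo): W 0 = 0, continuous paths,
   independent centered Gaussian increments with variance t - s
   (joint law of increments given by its joint cdf) *)
Definition std_BM {d} {T : measurableType d} (P : probability T R)
    (W : R -> T -> R) : Prop :=
  [/\ (forall t, 0 <= t -> measurable_fun setT (W t)),
      (forall w, W 0 w = 0),
      (forall w, {within `[0, +oo[, continuous (fun t => W t w)})
    & (forall (m : nat) (ts xs : nat -> R), ts 0%N = 0 ->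
        (forall j, (j < m)%N -> ts j < ts j.+1) ->
        P [set w | forall j, (0 < j <= m)%N -> W (ts j) w - W (ts j.-1) w <= xs j]
        = (\prod_(1 <= j < m.+1)
             normal_prob 0 (Num.sqrt (ts j - ts j.-1)) `]-oo, xs j])%E)].

(* (Q t)_{t in [0,1]} (on P) has the same finite-dimensional distributions as
   (X_{n - [k t], n})_{t in [0,1]} (on P0) *)
Definition same_law_ordstat {d d0} {T : measurableType d} {T0 : measurableType d0}
    (P : probability T R) (Q : R -> T -> R)
    (P0 : probability T0 R) (X : nat -> T0 -> R) (n k : nat) : Prop :=
  forall (m : nat) (ts xs : nat -> R), (forall j, (j < m)%N -> 0 <= ts j <= 1) ->
    P [set w | forall j, (j < m)%N -> Q (ts j) w <= xs j] =
    P0 [set w | forall j, (j < m)%N ->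
                  ordstat (fun i => X i w) n (n - Num.truncn (k%:R * ts j)) <= xs j].

(* Z_n = o_p(r_n): for all delta, eta > 0, eventually the event
   {Z_n > delta r_n} has (outer) probability <= eta *)
Definition oP {d} {T : measurableType d} (P : probability T R)
    (Z : nat -> T -> \bar R) (r : nat -> R) : Prop :=
  forall delta eta : R, 0 < delta -> 0 < eta ->
    \forall n \near \oo, exists A : set T,
      [/\ measurable A, [set w | ((delta * r n)%:E < Z n w)%E] `<=` A
        & (P A <= eta%:E)%E].

Definition sup01 (f : R -> R) : \bar R :=
  ereal_sup [set (f t)%:E | t in [set t : R | 0 < t <= 1]].

End defs.

(** Let [D_n(t)] be the error of the strong approximation of [Q_n(t)].
    Since [hgam g 1 = 0], [1^{-(g+1)} = 1] and [Psi 1 = 0] (the second-order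
    limit is trivially [0] at [x = 1]), the quantity inside the supremum is
    exactly [sqrt k_n (D_n(t) - D_n(1))].  As [t^{g+1/2+eps} <= 1] on [(0, 1]],
    its weighted supremum is at most [2 sqrt k_n] times that of [|D_n|], which
    is [o_p(k_n^{-1/2} + |Phitil(k_n/n)|)]; and [Phitil ~ Phi = O(k_n^{-1/2})]
    turns this into [o_p(1)]. *)
From HB Require Import structures.
From mathcomp Require Import all_boot all_order all_algebra.
From mathcomp Require Import all_classical all_reals all_analysis.
From mathcomp Require Import ring lra.

Set Implicit Arguments.
Unset Strict Implicit.
Unset Printing Implicit Defensive.
Import Order.TTheory GRing.Theory Num.Theory.
Import numFieldNormedType.Exports.
Local Open Scope classical_set_scope.
Local Open Scope ring_scope.

Lemma hgam1 (R : realType) (g : R) : hgam g 1 = 0.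
Proof. by rewrite /hgam; case: ifP => _; rewrite ?ln1 ?oppr0 ?powR1 ?subrr ?mul0r. Qed.

Lemma second_order_Psi1 (R : realType) (F : R -> R) (g : R) (a Phi Psi : R -> R) :
  second_order F g a Phi Psi -> Psi 1 = 0.
Proof.
move=> [_ [_ [_ [cvgPsi _]]]].
have := cvgPsi 1 ltr01.
have -> : (fun t => ((Finv F (1 - t * 1) - Finv F (1 - t)) / a t - hgam g 1) / Phi t)
          = fun=> 0.
  by apply: funext => t; rewrite mulr1 subrr mul0r hgam1 subrr mul0r.
by move/cvg_unique; apply=> //; exact: cvg_cst.
Qed.

Lemma norm_le_of_ratio_cvg1 (R : realType) (u v w : nat -> R) :
  (fun n => u n / v n) @ \oo --> (1 : R) ->
  (\forall n \near \oo, `|v n| <= w n) ->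
  \forall n \near \oo, `|u n| <= 2 * w n.
Proof.
move=> uv1 vw; near=> n.
have uvn : `|1 - u n / v n| < 1 by near: n; exact: cvgr_dist_lt.
have vwn : `|v n| <= w n by near: n.
have uv_lt2 : `|u n / v n| < 2.
  by have := ler_normD (u n / v n - 1) 1; rewrite subrK normr1 distrC; lra.
have vn0 : v n != 0.
  by apply: contraTneq uvn => ->; rewrite invr0 mulr0 subr0 normr1 ltxx.
rewrite -(divfK vn0 (u n)) normrM.
exact: ler_pM (normr_ge0 _) (normr_ge0 _) (ltW uv_lt2) vwn.
Unshelve. all: end_near.
Qed.

Lemma powR_norm_scale_diff_le (R : realType) (c t s x y : R) :
  0 <= c -> 0 < t <= 1 -> 0 <= s ->
  powR t c * `|s * (x - y)| <= s * (powR t c * `|x| + powR 1 c * `|y|).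
Proof.
move=> c_ge0 t01 s_ge0; rewrite powR1 mul1r normrM (ger0_norm s_ge0) mulrCA.
rewrite ler_wpM2l //.
have pt_ge0 : 0 <= powR t c by exact: powR_ge0.
have pt_le1 : powR t c <= 1 by rewrite -(powRr0 t); exact: ger_powR.
apply: (le_trans (ler_wpM2l pt_ge0 (ler_normB _ _))).
by rewrite mulrDr lerD2l ler_piMl.
Qed.

Lemma sup01_le_twice (R : realType) (f h : R -> R) (c : R) : 0 <= c ->
  (forall t, 0 < t <= 1 -> f t <= c * (h t + h 1)) ->
  (sup01 f <= (2 * c)%:E * sup01 h)%E.
Proof.
move=> c_ge0 fh; apply/ereal_supP => _ [t t01 <-].
have h_le_sup s : 0 < s <= 1 -> ((h s)%:E <= sup01 h)%E.
  by move=> s01; apply: ereal_sup_ubound; exists s.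
rewrite mulr2n mulrDl mul1r EFinD ge0_muleDl ?lee_fin //.
apply: (le_trans (_ : _ <= (c * h t)%:E + (c * h 1)%:E)%E).
  by rewrite -EFinD lee_fin -mulrDr; exact: fh.
by rewrite !EFinM leeD ?lee_wpmul2l ?lee_fin ?h_le_sup ?lexx ?ltr01.
Qed.

Section oP_theory.
Variables (R : realType) (d : measure_display) (T : measurableType d).
Variable (P : probability T R).

Lemma oP_le (Z Z' : nat -> T -> \bar R) (c r : nat -> R) :
  (\forall n \near \oo, 0 < c n /\ forall w, (Z' n w <= (c n)%:E * Z n w)%E) ->
  oP P Z r -> oP P Z' (fun n => c n * r n).
Proof.
move=> Z'_le_near oPZ delta eta delta_gt0 eta_gt0.
apply: (filterS2 _ _ Z'_le_near (oPZ _ _ delta_gt0 eta_gt0)).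
move=> n [c_gt0 Z'_le] [A [mA ZA PA]].
exists A; split=> // w /= Z'_gt; apply: ZA => /=.
rewrite -(@lte_pmul2l _ (c n)%:E) ?lte_fin //.
by rewrite -EFinM mulrCA (lt_le_trans Z'_gt).
Qed.

Lemma oP_rate (Z : nat -> T -> \bar R) (r r' : nat -> R) (K : R) : 0 < K ->
  (\forall n \near \oo, r n <= K * r' n) -> oP P Z r -> oP P Z r'.
Proof.
move=> K_gt0 rr' oPZ delta eta delta_gt0 eta_gt0.
have deltaK_gt0 : 0 < delta / K by exact: divr_gt0.
apply: (filterS2 _ _ rr' (oPZ _ _ deltaK_gt0 eta_gt0)) => n rr'n [A [mA ZA PA]].
exists A; split=> // w /= Z_gt; apply: ZA => /=; apply: le_lt_trans Z_gt.
rewrite lee_fin (le_trans (ler_wpM2l (ltW deltaK_gt0) rr'n)) //.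
by rewrite mulrA divfK ?gt_eqF.
Qed.

End oP_theory.

Section centering.
Variables (R : realType) (g : R) (Psi q B : R -> R) (b A ph kn : R).

Definition approx_error (t : R) : R :=
  (q t - b) / A - (hgam g t - powR t (- (g + 1)) * (B (kn * t) / kn) + ph * Psi t).

Hypotheses (Psi1 : Psi 1 = 0) (kn_gt0 : 0 < kn).

Lemma centered_approx_error (t : R) :
  Num.sqrt kn * ((q t - q 1) / A - hgam g t)
  - ((Num.sqrt kn)^-1 * B (kn * 1) - powR t (- (g + 1)) * ((Num.sqrt kn)^-1 * B (kn * t))
     + Num.sqrt kn * ph * Psi t)
  = Num.sqrt kn * (approx_error t - approx_error 1).
Proof.
rewrite /approx_error hgam1 powR1 Psi1.
move: (B (kn * t)) (B (kn * 1)) A^-1 => Bt B1 iA.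
have s_gt0 : 0 < Num.sqrt kn by rewrite sqrtr_gt0.
have kn_sq : kn = Num.sqrt kn ^+ 2 by rewrite sqr_sqrtr ?ltW.
set s := Num.sqrt kn in s_gt0 kn_sq *; rewrite kn_sq.
by field; rewrite gt_eqF.
Qed.

Lemma sup01_centered_le (c : R) : 0 <= c ->
  (sup01 (fun t => powR t c *
     `| Num.sqrt kn * ((q t - q 1) / A - hgam g t)
        - ((Num.sqrt kn)^-1 * B (kn * 1)
           - powR t (- (g + 1)) * ((Num.sqrt kn)^-1 * B (kn * t))
           + Num.sqrt kn * ph * Psi t) |)%R
   <= (2 * Num.sqrt kn)%:E * sup01 (fun t => powR t c * `|approx_error t|)%R)%E.
Proof.
move=> c_ge0; apply: sup01_le_twice; first exact: sqrtr_ge0.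
move=> t t01; rewrite centered_approx_error.
exact: powR_norm_scale_diff_le (sqrtr_ge0 _).
Qed.

End centering.

Theorem lemma3p1 (R : realType) (d0 : measure_display) (T0 : measurableType d0)
  (P0 : probability T0 R) (X : nat -> T0 -> R) (F : R -> R)
  (g : R) (a Phi Psi : R -> R) (k : nat -> nat)
  (d : measure_display) (T : measurableType d) (P : probability T R)
  (W : R -> T -> R) (Q : nat -> R -> T -> R) (atil Phitil : R -> R) :
  iid_cdf P0 X F ->
  - (1 / 2) < g ->
  second_order F g a Phi Psi ->
  @intermediate R k ->
  (exists C : R, \forall n \near \oo,
      `|Phi ((k n)%:R / n%:R)| <= C * (Num.sqrt (k n)%:R)^-1) ->
  std_BM P W ->
  (forall n, forall t, 0 <= t <= 1 -> measurable_fun setT (Q n t)) ->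
  (forall n, (k n < n)%N -> same_law_ordstat P (Q n) P0 X n (k n)) ->
  (fun n => (atil ((k n)%:R / n%:R) / a ((k n)%:R / n%:R) - 1)
              / Phi ((k n)%:R / n%:R)) @ \oo --> (0 : R) ->
  (fun n => Phitil ((k n)%:R / n%:R) / Phi ((k n)%:R / n%:R)) @ \oo --> (1 : R) ->
  (forall eps : R, 0 < eps ->
    oP P (fun n w => sup01 (fun t =>
        powR t (g + 1 / 2 + eps) *
        `| (Q n t w - Finv F (1 - (k n)%:R / n%:R)) / atil ((k n)%:R / n%:R)
           - (hgam g t - powR t (- (g + 1)) * (W ((k n)%:R * t) w / (k n)%:R)
              + Phitil ((k n)%:R / n%:R) * Psi t) |))
      (fun n => (Num.sqrt (k n)%:R)^-1 + `|Phitil ((k n)%:R / n%:R)|)) ->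
  forall eps : R, 0 < eps ->
    oP P (fun n w => sup01 (fun t =>
        let Wn := fun s => (Num.sqrt (k n)%:R)^-1 * W ((k n)%:R * s) w in
        let Yn := Num.sqrt (k n)%:R *
                  ((Q n t w - Q n 1 w) / atil ((k n)%:R / n%:R) - hgam g t) in
        powR t (g + 1 / 2 + eps) *
        `| Yn - (Wn 1 - powR t (- (g + 1)) * Wn t
                 + Num.sqrt (k n)%:R * Phitil ((k n)%:R / n%:R) * Psi t) |))
      (fun _ => 1).
Proof.
move=> _ g_gt hso [k_gt _] [C Phi_le] _ _ _ _ Phitil_Phi approx eps eps_gt0.
have c_ge0 : 0 <= g + 1 / 2 + eps by lra.
have Psi1 := second_order_Psi1 hso.
have Phitil_le := norm_le_of_ratio_cvg1 Phitil_Phi Phi_le.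
have kn_gt0 : \forall n \near \oo, 0 < (k n)%:R :> R.
  by apply: filterS (k_gt 1%N) => n; rewrite ltr0n.
apply: (oP_rate (K := 2 + 4 * `|C|) (r := fun n => 2 * Num.sqrt (k n)%:R *
    ((Num.sqrt (k n)%:R)^-1 + `|Phitil ((k n)%:R / n%:R)|))).
- by have := normr_ge0 C; lra.
- near=> n.
  have sk_gt0 : 0 < Num.sqrt (k n)%:R :> R by rewrite sqrtr_gt0; near: n.
  have Phitil_le_n : `|Phitil ((k n)%:R / n%:R)| <= 2 * (C / Num.sqrt (k n)%:R).
    by near: n.
  rewrite mulr1 mulrDr mulfK ?gt_eqF // lerD2l.
  apply: (le_trans (ler_wpM2l _ Phitil_le_n)); first by rewrite mulr_ge0 ?ltW.
  have -> : 2 * Num.sqrt (k n)%:R * (2 * (C / Num.sqrt (k n)%:R)) = 4 * C.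
    by field; rewrite gt_eqF.
  by rewrite ler_wpM2l ?ler_norm.
apply: oP_le (approx eps eps_gt0); near=> n; split.
  by rewrite mulr_gt0 // sqrtr_gt0; near: n.
move=> w; apply: (sup01_centered_le g (fun t => Q n t w) (fun x => W x w)) => //.
by near: n.
Unshelve. all: end_near.
Qed.
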